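(* For integers $n,k$, let $B(n,k)$ be the number of partitions $\lambda\in\mathcal{H}_n$ with $\mathrm{even}(\lambda)=k$ (so $B(n,k)=0$ if $k<0$ or $n\le 0$). Then $B(1,0)=1$ and for all $n\ge 2$ and all integers $k$, $$B(n,k)=B(n-1,k)+B(n-1,k-1)+B(n-2,k)-B(n-2,k-1).$$
   Context: A partition is a finite nonempty weakly decreasing sequence $\lambda=(\lambda_1,\ldots,\lambda_k)$ of positive integers; $\ell(\lambda)=k$ is its number of parts. The perimeter is $\Gamma(\lambda)=\lambda_1+\ell(\lambda)-1$; $\mathcal{H}_n$ is the set of partitions with perimeter $n$ (empty for $n\le 0$). $\mathrm{even}(\lambda)=|\{1\le i\le \ell(\lambda):\lambda_i\text{ is even}\}|$. *)

From mathcomp Require Import all_boot all_order all_algebra.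
Set Implicit Arguments. Unset Strict Implicit. Unset Printing Implicit Defensive.
Import Order.TTheory GRing.Theory Num.Theory.

Definition is_partition (l : seq nat) : bool :=
  [&& l != [::], all (fun x => 0 < x) l & sorted geq l].

Definition perimeter (l : seq nat) : nat := head 0 l + size l - 1.

Definition even_parts (l : seq nat) : nat := count (fun x => ~~ odd x) l.

Fixpoint bseqs (b len : nat) : seq (seq nat) :=
  match len with
  | 0 => [:: [::]]
  | len'.+1 => [::] :: [seq x :: s | x <- iota 1 b, s <- bseqs b len']
  end.

(* Every partition of perimeter n has at most n parts, each at most n, so
   the finite list bseqs n n contains all of H_n. *)
Definition H (n : nat) : seq (seq nat) :=
  [seq l <- undup (bseqs n n) | is_partition l && (perimeter l == n)].

Definition B (n : nat) (k : int) : int :=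
  Posz (count (fun l => Posz (even_parts l) == k) (H n)) : int.

(* Every partition of perimeter n + 2 arises in exactly one way from a
   partition of perimeter n + 1, either by appending a part 1 (if its last part
   is 1) or by adding 1 to every part (otherwise).  Appending 1 keeps the number
   of even parts, adding 1 everywhere swaps even and odd parts.  So if
   Bodd(n,k) counts the partitions in H_n with k odd parts, then for n >= 1
   B(n+1,k) = B(n,k) + Bodd(n,k) and Bodd(n+1,k) = Bodd(n,k-1) + B(n,k), and
   eliminating Bodd gives the recurrence. *)
From mathcomp Require Import all_boot all_order all_algebra.
From mathcomp Require Import zify.
Import Order.TTheory GRing.Theory Num.Theory.
Set Implicit Arguments. Unset Strict Implicit.

Lemma geq_trans : transitive geq.
Proof. by move=> m n p /= hnm hpn; exact: leq_trans hpn hnm. Qed.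

Lemma sorted_geq_rcons_min s y : sorted geq (rcons s y) -> all (leq y) s.
Proof.
rewrite -(rev_sorted leq) rev_rcons /= => /(order_path_min leq_trans).
by rewrite all_rev.
Qed.

Lemma is_partition_cons x s :
  is_partition (x :: s) = [&& 0 < x, all (fun y => 0 < y) s & path geq x s].
Proof. by rewrite /is_partition /= andbA. Qed.

Lemma partition_part_le_head l y :
  is_partition l -> y \in l -> 0 < y <= head 0 l.
Proof.
case: l => [|x s] //; rewrite is_partition_cons => /and3P[hx hs hp].
rewrite in_cons => /predU1P[-> | hy]; first by rewrite hx /=.
by rewrite (allP hs y hy); exact: (allP (order_path_min geq_trans hp) y hy).
Qed.

Lemma mem_bseqs b len l :
  (l \in bseqs b len) = (size l <= len) && all (fun x => 0 < x <= b) l.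
Proof.
elim: len l => [|len IH] [|x s] //=.
rewrite in_cons /=; apply/allpairsP/idP.
- case=> [[y t]] /= [+ + [-> ->]]; rewrite mem_iota IH => hy /andP[h1 h2].
  rewrite ltnS h1 h2 andbT; lia.
- move=> /andP[h1 /andP[h2 h3]]; exists (x, s); split => //=.
  + rewrite mem_iota; lia.
  + by rewrite IH -ltnS h1.
Qed.

Lemma mem_H n l : (l \in H n) = is_partition l && (perimeter l == n).
Proof.
rewrite /H mem_filter mem_undup mem_bseqs.
have [hl /= | //] := boolP (is_partition l).
case: eqP => //= <-; have hparts := partition_part_le_head hl.
apply/andP; split.
  case: l hl hparts => [|x s] // _ /(_ x (mem_head x s)); rewrite /perimeter /=; lia.
apply/allP => y /hparts /andP[hy hyx]; rewrite hy /perimeter.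
by case: (l) hl hyx => // x s _ /=; lia.
Qed.

Lemma uniq_H n : uniq (H n).
Proof. by rewrite filter_uniq ?undup_uniq. Qed.

Section PartitionOperations.

Variable l : seq nat.
Hypothesis partition_l : is_partition l.

Lemma is_partition_rcons1 : is_partition (rcons l 1).
Proof.
case: l partition_l => [|x s] // hl.
have /andP[hlast _] := partition_part_le_head hl (mem_last x s).
move: hl; rewrite !is_partition_cons rcons_path => /and3P[hx hs hp].
by rewrite hx all_rcons hs hp /= hlast.
Qed.

Lemma is_partition_map_succn : is_partition (map succn l).
Proof.
case/and3P: partition_l => hl _ hsorted.
rewrite /is_partition sorted_map (sub_sorted _ hsorted) ?andbT; last by move=> m n.
by case: l hl => //= x s _; apply/allP => y /mapP[z _ ->].
Qed.

Lemma perimeter_rcons1 : perimeter (rcons l 1) = (perimeter l).+1.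
Proof. by case: l partition_l => [|x s] // _; rewrite /perimeter /= size_rcons; lia. Qed.

Lemma perimeter_map_succn : perimeter (map succn l) = (perimeter l).+1.
Proof. by case: l partition_l => [|x s] // _; rewrite /perimeter /= size_map; lia. Qed.

Lemma partition_rcons1_or_map_succn : l != [:: 1] ->
  exists2 l', is_partition l' & l = rcons l' 1 \/ l = map succn l'.
Proof.
case/lastP: l partition_l => [|s y] // hl hneq1.
have /and3P[_ hpos hsorted] := hl.
have hmin := sorted_geq_rcons_min hsorted.
move: hpos; rewrite all_rcons => /andP[hy hspos].
have [y1 | y_gt1] := eqVneq y 1.
  subst y; exists s; last by left.
  rewrite /is_partition hspos (subseq_sorted geq_trans (subseq_rcons s 1) hsorted).
  by case: s hneq1 {hl hsorted hmin hspos}.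
exists (map predn (rcons s y)); last first.
  right; rewrite -map_comp map_id_in // => z /(partition_part_le_head hl) /andP[hz _].
  exact: prednK.
have hgt1 : all (fun z => 1 < z) (rcons s y).
  by rewrite all_rcons; apply/andP; split; [lia | apply/allP => z /(allP hmin); lia].
rewrite /is_partition; apply/and3P; split.
- by case: (s).
- by rewrite all_map; apply/allP => z /(allP hgt1) /=; lia.
- by rewrite sorted_map; apply: sub_sorted hsorted => m n /=; lia.
Qed.

End PartitionOperations.

Definition extend_partitions (s : seq (seq nat)) : seq (seq nat) :=
  [seq rcons l 1 | l <- s] ++ [seq map succn l | l <- s].

Lemma uniq_extend_partitions s :
  uniq s -> all is_partition s -> uniq (extend_partitions s).
Proof.
move=> hs hpart; rewrite cat_uniq (map_inj_uniq (@rcons_injl _ 1)).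
rewrite (map_inj_uniq (inj_map succn_inj)) hs andbT /=.
apply/hasPn => _ /mapP[l' hl' ->]; apply/negP => /mapP[l _ eq_l].
have : 1 \in map succn l' by rewrite eq_l mem_rcons mem_head.
case/mapP=> z hz [z0]; subst z.
by have /andP[] := partition_part_le_head (allP hpart l' hl') hz.
Qed.

Lemma perm_H_extend n : perm_eq (H n.+2) (extend_partitions (H n.+1)).
Proof.
have hpart : all is_partition (H n.+1) by apply/allP => l; rewrite mem_H => /andP[].
apply: uniq_perm; rewrite ?uniq_H ?uniq_extend_partitions ?uniq_H //.
move=> l; rewrite mem_cat mem_H; apply/idP/orP.
- case/andP=> hl /eqP hper.
  have hneq1 : l != [:: 1] by apply/eqP => l1; rewrite l1 in hper.
  have [l' hl' [el|el]] := partition_rcons1_or_map_succn hl hneq1; subst l.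
  + by left; apply: map_f; rewrite mem_H hl' -eqSS -perimeter_rcons1 // hper eqxx.
  + by right; apply: map_f; rewrite mem_H hl' -eqSS -perimeter_map_succn // hper eqxx.
- case=> /mapP[l' + ->]; rewrite mem_H => /andP[hl' /eqP hper].
  + by rewrite is_partition_rcons1 // perimeter_rcons1 // hper eqxx.
  + by rewrite is_partition_map_succn // perimeter_map_succn // hper eqxx.
Qed.

Lemma count_H_succ (a : pred (seq nat)) n :
  count a (H n.+2) =
  (count (preim (rcons^~ 1) a) (H n.+1) + count (preim (map succn) a) (H n.+1))%N.
Proof. by rewrite (permP (perm_H_extend n)) count_cat !count_map. Qed.

Definition odd_parts (l : seq nat) : nat := count odd l.

Lemma even_parts_rcons1 l : even_parts (rcons l 1) = even_parts l.
Proof. by rewrite /even_parts -cats1 count_cat addn0. Qed.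

Lemma odd_parts_rcons1 l : odd_parts (rcons l 1) = (odd_parts l).+1.
Proof. by rewrite /odd_parts -cats1 count_cat addn1. Qed.

Lemma even_parts_map_succn l : even_parts (map succn l) = odd_parts l.
Proof. by rewrite /even_parts count_map; apply: eq_count => x /=; rewrite negbK. Qed.

Lemma odd_parts_map_succn l : odd_parts (map succn l) = even_parts l.
Proof. by rewrite /odd_parts count_map. Qed.

Local Open Scope ring_scope.

Definition Bodd (n : nat) (k : int) : int :=
  Posz (count (fun l => Posz (odd_parts l) == k) (H n)).

Lemma B_succ n k : B n.+2 k = B n.+1 k + Bodd n.+1 k.
Proof.
rewrite /B /Bodd count_H_succ PoszD; congr (Posz _ + Posz _); apply: eq_count => l /=.
  by rewrite even_parts_rcons1.
by rewrite even_parts_map_succn.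
Qed.

Lemma Bodd_succ n k : Bodd n.+2 k = Bodd n.+1 (k - 1) + B n.+1 k.
Proof.
rewrite /B /Bodd count_H_succ PoszD; congr (Posz _ + Posz _); apply: eq_count => l /=.
  by rewrite odd_parts_rcons1; apply/eqP/eqP; lia.
by rewrite odd_parts_map_succn.
Qed.

Lemma H0 : H 0 = [::].
Proof. by []. Qed.

Lemma H1 : H 1 = [:: [:: 1]].
Proof. by []. Qed.

Lemma Bodd_B n k : Bodd n.+1 k = B n.+1 (k - 1) + B n k - B n (k - 1).
Proof.
case: n => [|n].
  rewrite /Bodd /B H0 H1 /= !addn0 subr0 addr0.
  by congr (Posz (nat_of_bool _)); apply/eqP/eqP; lia.
rewrite Bodd_succ B_succ; lia.
Qed.

Theorem lemma2p2 :
  B 1 0 = 1 /\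
  forall (n : nat) (k : int), (2 <= n)%N ->
    B n k = B n.-1 k + B n.-1 (k - 1) + B n.-2 k - B n.-2 (k - 1).
Proof.
split; first by rewrite /B H1.
move=> [|[|n]] k // _.
by rewrite /= B_succ Bodd_B !addrA.
Qed.
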